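(* Let $P$ be a discrete Dubins path, let $ab$ be an inflection edge of $P$ (traversed from $a$ to $b$), and let $P'$ be the part of $P$ from $b$ to its last vertex. For $\varepsilon\in[0,1]$ let $P(\varepsilon)$ be the path obtained from $P$ by rigidly translating $P'$ by the vector $\varepsilon(a-b)$ (i.e. towards $a$ along $ab$ by distance $\varepsilon|ab|$) and replacing $ab$ by the segment from $a$ to $b+\varepsilon(a-b)$. Then there exists $\varepsilon>0$ such that $P(\varepsilon)$ is a discrete curvature-constrained path.
   Context: Fix an angle $\theta$ with $0\le\theta\le\pi/2$ such that $2\pi/\theta$ is an integer, and a length $\ell>0$. For a polygonal path, the turn at an internal vertex is the angle in $[0,\pi]$ between the direction of the incoming edge and the direction of the outgoing edge. An edge is short if its length is $<\ell$, normal if $=\ell$, long if $>\ell$. An edge $e$ with an adjacent edge at each end is an inflection edge if its two adjacent edges lie on opposite sides of the supporting line of $e$, and non-inflection otherwise. A discrete curvature-constrained path is a polygonal path such that: (i) the turn at every internal vertex is at most $\theta$; (ii) no two adjacent edges are both short; (iii) for every short non-inflection edge $ab$ with adjacent edges $a^-a$ and $bb^+$, the angle between the directions $\overrightarrow{a^-a}$ and $\overrightarrow{bb^+}$ is at most $\theta$. A configuration is a pair $(u,U)$ of a point $u$ and a vector $U$ of length $\ell$. A polygonal path $P$ with first vertex $u$ starts at $(u,U)$ if prepending the segment from $u-U$ to $u$ (the pre-edge) yields a discrete curvature-constrained path; $P$ with last vertex $v$ ends at $(v,V)$ if appending the segment from $v$ to $v+V$ (the post-edge) yields a discrete curvature-constrained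 path. A discrete Dubins path is a discrete curvature-constrained path of minimum length among all those starting at a given configuration $\mathcal U$ and ending at a given configuration $\mathcal V$. Standing assumption: paths make a non-zero turn at every internal vertex. *)

From Stdlib Require Import Reals List Arith.
Import ListNotations.
Open Scope R_scope.

Definition pt := (R * R)%type.

Definition vadd (p q : pt) : pt := (fst p + fst q, snd p + snd q).
Definition vsub (p q : pt) : pt := (fst p - fst q, snd p - snd q).
Definition vscale (c : R) (p : pt) : pt := (c * fst p, c * snd p).
Definition dot (p q : pt) : R := fst p * fst q + snd p * snd q.
Definition cross (p q : pt) : R := fst p * snd q - snd p * fst q.
Definition vnorm (p : pt) : R := sqrt (dot p p).

Definition angle (u v : pt) : R := acos (dot u v / (vnorm u * vnorm v)).

(* A polygonal path is the list of its vertices p_0, ..., p_n;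
   edge j is the segment p_j p_(j+1), for j+1 < length p. *)
Definition vtx (p : list pt) (i : nat) : pt := nth i p (0, 0).
Definition evec (p : list pt) (j : nat) : pt := vsub (vtx p (S j)) (vtx p j).
Definition elen (p : list pt) (j : nat) : R := vnorm (evec p j).

Definition path_length (p : list pt) : R :=
  fold_right Rplus 0 (map (elen p) (seq 0 (pred (length p)))).

(* turn at internal vertex p_(i+1) *)
Definition turn (p : list pt) (i : nat) : R := angle (evec p i) (evec p (S i)).

Definition short (l : R) (p : list pt) (j : nat) : Prop := elen p j < l.

(* edge j (with adjacent edges j-1 and j+1) is an inflection edge:
   the adjacent edges lie on (strictly) opposite sides of the supporting line *)
Definition inflection (p : list pt) (j : nat) : Prop :=
  cross (evec p j) (vsub (vtx p (pred j)) (vtx p j)) *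
  cross (evec p j) (vsub (vtx p (S (S j))) (vtx p j)) < 0.

Definition dcc_path (theta l : R) (p : list pt) : Prop :=
  p <> [] /\
  (forall j, (S j < length p)%nat -> evec p j <> (0, 0)) /\
  (forall i, (S (S i) < length p)%nat -> turn p i <= theta) /\
  (forall i, (S (S i) < length p)%nat -> ~ (short l p i /\ short l p (S i))) /\
  (forall j, (1 <= j)%nat -> (S (S j) < length p)%nat ->
     short l p j -> ~ inflection p j ->
     angle (evec p (pred j)) (evec p (S j)) <= theta).

Definition config (l : R) (u U : pt) : Prop := vnorm U = l.

Definition starts_at (theta l : R) (p : list pt) (u U : pt) : Prop :=
  p <> [] /\ vtx p 0 = u /\ dcc_path theta l (vsub u U :: p).

Definition ends_at (theta l : R) (p : list pt) (v V : pt) : Prop :=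
  p <> [] /\ last p (0, 0) = v /\ dcc_path theta l (p ++ [vadd v V]).

Definition dubins_path (theta l : R) (p : list pt) (u U v V : pt) : Prop :=
  dcc_path theta l p /\ starts_at theta l p u U /\ ends_at theta l p v V /\
  forall q, dcc_path theta l q -> starts_at theta l q u U -> ends_at theta l q v V ->
    path_length p <= path_length q.

(* P(eps): vertices after p_j (i.e. from b = p_(j+1) on) translated by eps (a - b) *)
Definition shift_path (p : list pt) (j : nat) (eps : R) : list pt :=
  map (fun i => if Nat.leb i j then vtx p i
                else vadd (vtx p i) (vscale eps (vsub (vtx p j) (vtx p (S j)))))
      (seq 0 (length p)).

From Stdlib Require Import Reals List Lra Lia Psatz.
Import ListNotations.
Open Scope R_scope.

(* Shortening the inflection edge ab while translating the rest of P scales the edge vector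
   of ab by 1 - eps and leaves every other edge vector unchanged.  Turns are invariant under
   positive scaling and ab stays an inflection edge, so only condition (ii) can fail: ab may
   become short next to a short edge.  If |ab| > l a small eps keeps ab long enough, and if
   |ab| < l its neighbours are not short already.  If |ab| = l and the next edge bc is short,
   sliding b slightly along bc keeps the path (together with its pre- and post-edge)
   curvature-constrained, and strictly shortens it because ab and bc are not parallel,
   contradicting minimality.  A short previous edge is handled by reversing the path. *)

Lemma pt_eq (p q : pt) : fst p = fst q -> snd p = snd q -> p = q.
Proof. destruct p, q; simpl; intros -> ->; reflexivity. Qed.

Lemma dot_sym u v : dot u v = dot v u.
Proof. unfold dot; ring. Qed.

Lemma dot_self_ge0 u : 0 <= dot u u.
Proof. unfold dot; nra. Qed.

Lemma dot_self_pos u : u <> (0, 0) -> 0 < dot u u.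
Proof.
  destruct u as [x y]; unfold dot; simpl; intro Hu.
  destruct (Req_dec x 0) as [->|]; [destruct (Req_dec y 0) as [->|]|]; [now contradict Hu| nra| nra].
Qed.

Lemma vnorm_ge0 u : 0 <= vnorm u.
Proof. apply sqrt_pos. Qed.

Lemma vnorm_sq u : vnorm u * vnorm u = dot u u.
Proof. apply sqrt_sqrt, dot_self_ge0. Qed.

Lemma vnorm_pos u : u <> (0, 0) -> 0 < vnorm u.
Proof. intro Hu; apply sqrt_lt_R0, dot_self_pos, Hu. Qed.

Lemma vnorm_pos_neq0 u : 0 < vnorm u -> u <> (0, 0).
Proof. intros Hu ->; unfold vnorm, dot in Hu; simpl in Hu; rewrite Rmult_0_l, Rplus_0_l, sqrt_0 in Hu; lra. Qed.

Lemma vnorm_scale c u : 0 <= c -> vnorm (vscale c u) = c * vnorm u.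
Proof.
  intro Hc; unfold vnorm.
  replace (dot (vscale c u) (vscale c u)) with (c * c * dot u u) by (unfold dot, vscale; simpl; ring).
  rewrite sqrt_mult_alt, sqrt_square by nra; reflexivity.
Qed.

Lemma vnorm_opp u : vnorm (vscale (-1) u) = vnorm u.
Proof. unfold vnorm; f_equal; unfold dot, vscale; simpl; ring. Qed.

Lemma vscale_neq0 c u : c <> 0 -> u <> (0, 0) -> vscale c u <> (0, 0).
Proof.
  intros Hc Hu Hcu; apply Hu; destruct u as [x y]; unfold vscale in Hcu; simpl in Hcu.
  injection Hcu as Hx Hy; apply pt_eq; simpl; nra.
Qed.

Lemma lagrange_identity u v : dot u v * dot u v + cross u v * cross u v = dot u u * dot v v.
Proof. unfold dot, cross; ring. Qed.

Lemma sq_le_nonneg x y : 0 <= x -> 0 <= y -> y * y <= x * x -> y <= x.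
Proof. intros; nra. Qed.

Lemma vnorm_mul_sq u v : vnorm u * vnorm v * (vnorm u * vnorm v) = dot u u * dot v v.
Proof. rewrite <- (vnorm_sq u), <- (vnorm_sq v); ring. Qed.

Lemma dot_le_vnorm u v : dot u v <= vnorm u * vnorm v.
Proof.
  pose proof (lagrange_identity u v); pose proof (vnorm_mul_sq u v).
  assert (0 <= vnorm u * vnorm v) by (apply Rmult_le_pos; apply vnorm_ge0).
  destruct (Rle_dec (dot u v) 0); [lra|].
  apply sq_le_nonneg; nra.
Qed.

Lemma dot_lt_vnorm u v : cross u v <> 0 -> dot u v < vnorm u * vnorm v.
Proof.
  intro Hc; pose proof (lagrange_identity u v); pose proof (vnorm_mul_sq u v).
  assert (0 <= vnorm u * vnorm v) by (apply Rmult_le_pos; apply vnorm_ge0).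
  assert (0 < cross u v * cross u v)
    by (destruct (Rtotal_order (cross u v) 0) as [|[|]]; [nra| contradiction| nra]).
  destruct (Rle_dec (dot u v) 0); nra.
Qed.

Lemma dot_vadd_self u v : dot (vadd u v) (vadd u v) = dot u u + 2 * dot u v + dot v v.
Proof. unfold dot, vadd; simpl; ring. Qed.

Lemma vnorm_triangle u v : vnorm (vadd u v) <= vnorm u + vnorm v.
Proof.
  pose proof (vnorm_sq (vadd u v)); pose proof (vnorm_sq u); pose proof (vnorm_sq v).
  pose proof (vnorm_ge0 (vadd u v)); pose proof (vnorm_ge0 u); pose proof (vnorm_ge0 v).
  pose proof (dot_le_vnorm u v); rewrite dot_vadd_self in *; apply sq_le_nonneg; nra.
Qed.

Lemma vnorm_triangle_strict u v : cross u v <> 0 -> vnorm (vadd u v) < vnorm u + vnorm v.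
Proof.
  intro Hc; pose proof (vnorm_sq (vadd u v)); pose proof (vnorm_sq u); pose proof (vnorm_sq v).
  pose proof (vnorm_ge0 (vadd u v)); pose proof (vnorm_ge0 u); pose proof (vnorm_ge0 v).
  pose proof (dot_lt_vnorm u v Hc); rewrite dot_vadd_self in *; nra.
Qed.

Lemma acos_le_iff r th : -1 <= r <= 1 -> 0 <= th <= PI -> (acos r <= th <-> cos th <= r).
Proof.
  intros Hr Hth; pose proof (acos_bound r); rewrite <- (cos_acos r Hr) at 2.
  split; intro Hle.
  - destruct (Req_dec (acos r) th) as [<-|]; [lra|].
    apply Rlt_le, cos_decreasing_1; lra.
  - destruct (Rle_dec (acos r) th) as [|Hlt]; [assumption|].
    pose proof (cos_decreasing_1 th (acos r)); lra.
Qed.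

Lemma le_div_iff a b c : 0 < c -> (a <= b / c <-> a * c <= b).
Proof.
  intro Hc; assert (Hb : b = b / c * c) by (field; lra).
  rewrite Hb at 2; split; intro; nra.
Qed.

Lemma div_le_iff a b c : 0 < c -> (b / c <= a <-> b <= a * c).
Proof.
  intro Hc; assert (Hb : b = b / c * c) by (field; lra).
  rewrite Hb at 2; split; intro; nra.
Qed.

Lemma angle_le_iff u v th : u <> (0, 0) -> v <> (0, 0) -> 0 <= th <= PI ->
  (angle u v <= th <-> cos th * (vnorm u * vnorm v) <= dot u v).
Proof.
  intros Hu Hv Hth.
  assert (Huv : 0 < vnorm u * vnorm v) by (apply Rmult_lt_0_compat; apply vnorm_pos; assumption).
  assert (Hlow : - (vnorm u * vnorm v) <= dot u v).
  { pose proof (dot_le_vnorm (vscale (-1) u) v) as Hopp; rewrite vnorm_opp in Hopp.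
    unfold dot, vscale in *; simpl in *; lra. }
  pose proof (dot_le_vnorm u v).
  assert (Hr : -1 <= dot u v / (vnorm u * vnorm v) <= 1)
    by (split; [apply le_div_iff| apply div_le_iff]; lra).
  unfold angle; rewrite acos_le_iff by assumption; apply le_div_iff; lra.
Qed.

Lemma angle_sym u v : angle u v = angle v u.
Proof. unfold angle; rewrite dot_sym, Rmult_comm; reflexivity. Qed.

Lemma angle_scale_l c u v : 0 < c -> angle (vscale c u) v = angle u v.
Proof.
  intro Hc; unfold angle, Rdiv; rewrite vnorm_scale by lra; f_equal.
  replace (dot (vscale c u) v) with (c * dot u v) by (unfold dot, vscale; simpl; ring).
  replace (c * vnorm u * vnorm v) with (c * (vnorm u * vnorm v)) by ring.
  rewrite Rinv_mult.
  replace (c * dot u v * (/ c * / (vnorm u * vnorm v)))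
    with (dot u v * / (vnorm u * vnorm v) * (c * / c)) by ring.
  rewrite Rinv_r by lra; ring.
Qed.

Lemma angle_scale_r c u v : 0 < c -> angle u (vscale c v) = angle u v.
Proof. intro Hc; rewrite angle_sym, angle_scale_l by exact Hc; apply angle_sym. Qed.

Lemma angle_opp u v : angle (vscale (-1) u) (vscale (-1) v) = angle u v.
Proof.
  unfold angle; rewrite !vnorm_opp; do 2 f_equal; unfold dot, vscale; simpl; ring.
Qed.

Lemma angle_dot_nonneg u v th : u <> (0, 0) -> v <> (0, 0) -> 0 <= th <= PI / 2 ->
  angle u v <= th -> 0 <= dot u v.
Proof.
  intros Hu Hv Hth Huv; pose proof PI_RGT_0.
  assert (0 <= cos th) by (apply cos_ge_0; lra).
  apply angle_le_iff in Huv; [|assumption|assumption|lra].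
  pose proof (vnorm_ge0 u); pose proof (vnorm_ge0 v).
  assert (0 <= cos th * (vnorm u * vnorm v)) by (repeat apply Rmult_le_pos; assumption).
  lra.
Qed.

(* With [a1, b1 = P cos phi1, P sin phi1] and [a2, b2 = Q cos phi2, Q sin phi2], this is
   [cos phi1 <= cos (phi1 - phi2)] for [0 <= phi2 <= phi1 <= PI / 2]. *)
Lemma same_side_core a1 b1 a2 b2 P Q : 0 < P -> 0 < Q ->
  a1 * a1 + b1 * b1 = P * P -> a2 * a2 + b2 * b2 = Q * Q -> 0 <= a1 -> 0 <= a2 ->
  a1 * Q <= a2 * P -> 0 <= b1 * b2 -> a1 * Q <= a1 * a2 + b1 * b2.
Proof.
  intros HP HQ E1 E2 Ha1 Ha2 Hle Hb.
  assert (Ha2Q : a2 <= Q) by nra.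
  assert (Hkey : a1 * a1 * (Q - a2) <= (P * P - a1 * a1) * (Q + a2)).
  { assert (Ha1P : a1 <= P) by nra.
    assert (a1 * (a1 * Q) <= a1 * (a2 * P)) by (apply Rmult_le_compat_l; lra).
    assert (a1 * a2 * P <= P * a2 * P) by (apply Rmult_le_compat_r; [|apply Rmult_le_compat_r]; lra).
    assert (a1 * a1 * Q <= P * P * Q) by (apply Rmult_le_compat_r; nra).
    nra. }
  assert (Hsq : (a1 * (Q - a2)) * (a1 * (Q - a2)) <= (b1 * b2) * (b1 * b2)).
  { replace ((b1 * b2) * (b1 * b2)) with ((P * P - a1 * a1) * (Q + a2) * (Q - a2)) by nra.
    assert (0 <= Q - a2) by lra; nra. }
  assert (a1 * (Q - a2) <= b1 * b2) by (apply sq_le_nonneg; nra).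
  lra.
Qed.

Lemma same_side_bound a1 b1 a2 b2 P Q C : 0 < P -> 0 < Q -> 0 <= C ->
  a1 * a1 + b1 * b1 = P * P -> a2 * a2 + b2 * b2 = Q * Q ->
  C * P <= a1 -> C * Q <= a2 -> 0 <= b1 * b2 -> C * P * Q <= a1 * a2 + b1 * b2.
Proof.
  intros HP HQ HC E1 E2 H1 H2 Hb.
  assert (0 <= a1) by nra; assert (0 <= a2) by nra.
  destruct (Rle_dec (a1 * Q) (a2 * P)).
  - pose proof (same_side_core a1 b1 a2 b2 P Q); nra.
  - pose proof (same_side_core a2 b2 a1 b1 Q P); nra.
Qed.

Lemma dot_cross_expand e x y : dot x y * dot e e = dot e x * dot e y + cross e x * cross e y.
Proof. unfold dot, cross; ring. Qed.

Lemma angle_le_same_side e x y th : e <> (0, 0) -> x <> (0, 0) -> y <> (0, 0) ->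
  0 <= th <= PI / 2 -> angle e x <= th -> angle e y <= th ->
  0 <= cross e x * cross e y -> angle x y <= th.
Proof.
  intros He Hx Hy Hth Hex Hey Hc; pose proof PI_RGT_0.
  assert (HC : 0 <= cos th) by (apply cos_ge_0; lra).
  apply angle_le_iff in Hex, Hey; try lra; try assumption.
  apply angle_le_iff; try lra; try assumption.
  pose proof (vnorm_pos e He); pose proof (vnorm_pos x Hx); pose proof (vnorm_pos y Hy).
  pose proof (vnorm_sq e); pose proof (vnorm_sq x); pose proof (vnorm_sq y).
  pose proof (lagrange_identity e x); pose proof (lagrange_identity e y).
  pose proof (dot_cross_expand e x y).
  assert (Hb : cos th * (vnorm e * vnorm x) * (vnorm e * vnorm y)
               <= dot e x * dot e y + cross e x * cross e y)
    by (apply same_side_bound; nra).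
  assert (0 < dot e e) by nra.
  apply (Rmult_le_reg_r (dot e e)); nra.
Qed.

Lemma dot_vadd_scale_r u e f t : dot u (vadd e (vscale t f)) = dot u e + t * dot u f.
Proof. unfold dot, vadd, vscale; simpl; ring. Qed.

Lemma cross_vadd_scale_r u e f t : cross u (vadd e (vscale t f)) = cross u e + t * cross u f.
Proof. unfold cross, vadd, vscale; simpl; ring. Qed.

Lemma cross_self u : cross u u = 0.
Proof. unfold cross; ring. Qed.

Lemma cross_anti u v : cross u v = - cross v u.
Proof. unfold cross; ring. Qed.

Lemma cross_scale_l c u v : cross (vscale c u) v = c * cross u v.
Proof. unfold cross, vscale; simpl; ring. Qed.

Lemma cross_scale_r c u v : cross u (vscale c v) = c * cross u v.
Proof. unfold cross, vscale; simpl; ring. Qed.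

Lemma dot_vadd_scale_self e f t :
  dot (vadd e (vscale t f)) (vadd e (vscale t f)) = dot e e + 2 * t * dot e f + t * t * dot f f.
Proof. unfold dot, vadd, vscale; simpl; ring. Qed.

Lemma vnorm_le_vadd_scale e f t : 0 <= dot e f -> 0 <= t -> vnorm e <= vnorm (vadd e (vscale t f)).
Proof.
  intros Hd Ht; apply sqrt_le_1_alt; rewrite dot_vadd_scale_self.
  pose proof (dot_self_ge0 f); nra.
Qed.

Lemma vadd_scale_neq0 e f t : e <> (0, 0) -> 0 <= dot e f -> 0 <= t -> vadd e (vscale t f) <> (0, 0).
Proof.
  intros He Hd Ht; apply vnorm_pos_neq0.
  pose proof (vnorm_pos e He); pose proof (vnorm_le_vadd_scale e f t Hd Ht); lra.
Qed.

Lemma angle_le_vadd_l e f t th : e <> (0, 0) -> f <> (0, 0) -> 0 <= th <= PI / 2 -> 0 <= t ->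
  angle e f <= th -> angle e (vadd e (vscale t f)) <= th.
Proof.
  intros He Hf Hth Ht Hef; pose proof PI_RGT_0.
  assert (HC : 0 <= cos th <= 1) by (split; [apply cos_ge_0; lra| apply COS_bound]).
  pose proof (angle_dot_nonneg e f th He Hf Hth Hef) as Hd.
  apply angle_le_iff in Hef; [|assumption|assumption|lra].
  apply angle_le_iff; [assumption| apply vadd_scale_neq0; assumption| lra|].
  (* the triangle inequality |e + t f| <= |e| + t |f| does the work *)
  pose proof (vnorm_triangle e (vscale t f)) as Htri; rewrite vnorm_scale in Htri by exact Ht.
  pose proof (vnorm_ge0 e); pose proof (vnorm_ge0 f); pose proof (vnorm_sq e).
  rewrite dot_vadd_scale_r.
  assert (cos th * vnorm e * vnorm (vadd e (vscale t f)) <= cos th * vnorm e * (vnorm e + t * vnorm f))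
    by (apply Rmult_le_compat_l; nra).
  assert (cos th * (vnorm e * vnorm e) <= dot e e) by nra.
  nra.
Qed.

Lemma angle_le_vadd_r e f t th : e <> (0, 0) -> f <> (0, 0) -> 0 <= th <= PI / 2 -> 0 < t ->
  angle e f <= th -> angle (vadd e (vscale t f)) f <= th.
Proof.
  intros He Hf Hth Ht Hef.
  replace (vadd e (vscale t f)) with (vscale t (vadd f (vscale (/ t) e)))
    by (apply pt_eq; unfold vadd, vscale; simpl; field; lra).
  rewrite angle_scale_l, angle_sym by exact Ht.
  apply angle_le_vadd_l; try assumption.
  - left; apply Rinv_0_lt_compat, Ht.
  - rewrite angle_sym; assumption.
Qed.

Lemma angle_le_vadd_same_side e f y t th : e <> (0, 0) -> f <> (0, 0) -> y <> (0, 0) ->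
  0 <= th <= PI / 2 -> 0 <= t -> angle e f <= th -> angle e y <= th ->
  0 <= cross e f * cross e y -> angle (vadd e (vscale t f)) y <= th.
Proof.
  intros He Hf Hy Hth Ht Hef Hey Hc.
  assert (Hd : 0 <= dot e f) by (apply (angle_dot_nonneg e f th); assumption).
  apply (angle_le_same_side e); try assumption.
  - apply vadd_scale_neq0; assumption.
  - apply angle_le_vadd_l; assumption.
  - rewrite cross_vadd_scale_r, cross_self, Rplus_0_l.
    replace (t * cross e f * cross e y) with (t * (cross e f * cross e y)) by ring.
    apply Rmult_le_pos; assumption.
Qed.

Lemma cross_turn_consistent e f g : f <> (0, 0) -> 0 <= dot e f -> 0 <= dot f g ->
  0 <= cross e f * cross f g -> 0 <= cross e f * cross e g.
Proof.
  intros Hf Hef Hfg Hc; pose proof (dot_self_pos f Hf).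
  assert (Hid : cross e f * cross e g * dot f f
                = dot f g * (cross e f * cross e f) + dot e f * (cross e f * cross f g))
    by (unfold dot, cross; ring).
  assert (0 <= cross e f * cross e g * dot f f) by (rewrite Hid; nra).
  nra.
Qed.

Definition edge_inflection (E : nat -> pt) (j : nat) : Prop :=
  0 < cross (E j) (E (pred j)) * cross (E j) (E (S j)).

Record dcc_edges (th l : R) (n : nat) (E : nat -> pt) : Prop := {
  dcc_nonempty : (0 < n)%nat;
  dcc_nondeg : forall j, (S j < n)%nat -> E j <> (0, 0);
  dcc_turn : forall i, (S (S i) < n)%nat -> angle (E i) (E (S i)) <= th;
  dcc_no_two_short : forall i, (S (S i) < n)%nat -> ~ (vnorm (E i) < l /\ vnorm (E (S i)) < l);
  dcc_short_turn : forall j, (1 <= j)%nat -> (S (S j) < n)%nat -> vnorm (E j) < l ->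
    ~ edge_inflection E j -> angle (E (pred j)) (E (S j)) <= th }.

Lemma inflection_iff L j : (1 <= j)%nat -> inflection L j <-> edge_inflection (evec L) j.
Proof.
  intro Hj; destruct j as [|j]; [lia|].
  unfold inflection, edge_inflection, evec, cross, vsub; simpl pred.
  destruct (vtx L j), (vtx L (S j)), (vtx L (S (S j))), (vtx L (S (S (S j)))); simpl.
  match goal with |- ?P < 0 <-> 0 < ?Q => replace P with (- Q) by ring end; lra.
Qed.

Lemma dcc_path_iff th l L : dcc_path th l L <-> dcc_edges th l (length L) (evec L).
Proof.
  unfold dcc_path, short, elen; split.
  - intros (HL & H1 & H2 & H3 & H4); constructor; try assumption.
    + destruct L; [congruence| simpl; lia].
    + intros j Hj1 Hj2 Hs Hi; apply H4; try assumption; rewrite inflection_iff; assumption.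
  - intros [H0 H1 H2 H3 H4]; repeat split; try assumption.
    + destruct L; simpl in H0; [lia| discriminate].
    + intros j Hj1 Hj2 Hs Hi; apply H4; try assumption; rewrite <- inflection_iff; assumption.
Qed.

Lemma edge_inflection_ext n E E' j : (forall i, (S i < n)%nat -> E' i = E i) ->
  (1 <= j)%nat -> (S (S j) < n)%nat -> edge_inflection E' j <-> edge_inflection E j.
Proof.
  intros HE Hj1 Hj2; unfold edge_inflection; rewrite !HE by lia; reflexivity.
Qed.

Lemma dcc_edges_ext th l n E E' : (forall i, (S i < n)%nat -> E' i = E i) ->
  dcc_edges th l n E -> dcc_edges th l n E'.
Proof.
  intros HE [H0 H1 H2 H3 H4]; constructor; try assumption.
  - intros; rewrite HE by lia; auto.
  - intros; rewrite !HE by lia; auto.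
  - intros; rewrite !HE by lia; auto.
  - intros j Hj1 Hj2 Hs Hi; rewrite !HE by lia.
    rewrite HE in Hs by lia; rewrite (edge_inflection_ext n E E') in Hi by assumption.
    auto.
Qed.

Definition rev_edges (n : nat) (E : nat -> pt) (i : nat) : pt := vscale (-1) (E (n - 2 - i)%nat).

Lemma cross_opp u v : cross (vscale (-1) u) (vscale (-1) v) = cross u v.
Proof. unfold cross, vscale; simpl; ring. Qed.

Lemma edge_inflection_rev n E j : (1 <= j)%nat -> (S (S j) < n)%nat ->
  edge_inflection (rev_edges n E) j <-> edge_inflection E (n - 2 - j).
Proof.
  intros Hj1 Hj2; unfold edge_inflection, rev_edges; rewrite !cross_opp.
  replace (n - 2 - pred j)%nat with (S (n - 2 - j)) by lia.
  replace (n - 2 - S j)%nat with (pred (n - 2 - j)) by lia.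
  rewrite Rmult_comm; reflexivity.
Qed.

Lemma dcc_edges_rev th l n E : dcc_edges th l n E -> dcc_edges th l n (rev_edges n E).
Proof.
  intros [H0 H1 H2 H3 H4]; constructor; try assumption.
  - intros j Hj; unfold rev_edges; apply vscale_neq0; [lra| apply H1; lia].
  - intros i Hi; unfold rev_edges; rewrite angle_opp, angle_sym.
    replace (n - 2 - i)%nat with (S (n - 2 - S i)) by lia; apply H2; lia.
  - intros i Hi; unfold rev_edges; rewrite !vnorm_opp.
    replace (n - 2 - i)%nat with (S (n - 2 - S i)) by lia.
    intros [Ha Hb]; apply (H3 (n - 2 - S i)%nat); [lia| tauto].
  - intros j Hj1 Hj2 Hs Hi; rewrite edge_inflection_rev in Hi by assumption.
    unfold rev_edges in *; rewrite vnorm_opp in Hs; rewrite angle_opp, angle_sym.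
    replace (n - 2 - pred j)%nat with (S (n - 2 - j)) by lia.
    replace (n - 2 - S j)%nat with (pred (n - 2 - j)) by lia.
    apply H4; auto; lia.
Qed.

Ltac destruct_eq_dec :=
  repeat match goal with
  | |- context [Nat.eq_dec ?a ?b] => destruct (Nat.eq_dec a b) as [?Heq|?Hneq]; try (exfalso; lia)
  | H : context [Nat.eq_dec ?a ?b] |- _ => destruct (Nat.eq_dec a b) as [?Heq|?Hneq]; try (exfalso; lia)
  end;
  repeat match goal with H : S _ = S _ |- _ => injection H as H end.

Definition scale_edge (E : nat -> pt) (j : nat) (c : R) (i : nat) : pt :=
  if Nat.eq_dec i j then vscale c (E j) else E i.

Lemma pos_mul_iff c x : 0 < c -> (0 < c * x <-> 0 < x).
Proof. intro Hc; split; intro; nra. Qed.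

Lemma edge_inflection_scale_edge E j c m : (1 <= j)%nat -> 0 < c ->
  edge_inflection (scale_edge E j c) m <-> edge_inflection E m.
Proof.
  intros Hj Hc; unfold edge_inflection, scale_edge; destruct_eq_dec; subst;
    rewrite ?cross_scale_l, ?cross_scale_r; try reflexivity.
  - match goal with |- 0 < c * ?a * (c * ?b) <-> _ =>
      replace (c * a * (c * b)) with (c * c * (a * b)) by ring end.
    apply pos_mul_iff; nra.
  - rewrite Rmult_assoc; apply pos_mul_iff, Hc.
  - match goal with |- 0 < ?a * (c * ?b) <-> _ =>
      replace (a * (c * b)) with (c * (a * b)) by ring end.
    apply pos_mul_iff, Hc.
Qed.

Lemma dcc_edges_scale_edge th l n E j c : dcc_edges th l n E -> (1 <= j)%nat -> 0 < c ->
  edge_inflection E j ->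
  (vnorm (vscale c (E j)) < l -> ~ vnorm (E (pred j)) < l /\ ~ vnorm (E (S j)) < l) ->
  dcc_edges th l n (scale_edge E j c).
Proof.
  intros [H0 H1 H2 H3 H4] Hj Hc Hinfl Hshort; constructor; try assumption.
  - intros i Hi; unfold scale_edge; destruct_eq_dec; subst; [apply vscale_neq0; [lra|]|]; auto.
  - intros i Hi; unfold scale_edge; destruct_eq_dec; subst;
      rewrite ?angle_scale_l, ?angle_scale_r by exact Hc; auto.
  - intros i Hi; unfold scale_edge; destruct_eq_dec; subst; intros [Ha Hb]; auto.
    + apply Hshort in Ha; tauto.
    + apply Hshort in Hb; tauto.
    + apply (H3 i); tauto.
  - intros m Hm1 Hm2 Hs Hi; rewrite edge_inflection_scale_edge in Hi by assumption.
    unfold scale_edge in *; destruct_eq_dec; subst;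
      rewrite ?angle_scale_l, ?angle_scale_r by exact Hc; auto.
    contradiction.
Qed.

(* Moves the vertex between edges [j] and [S j] forward by the fraction [t] of edge [S j]. *)
Definition slide_vertex (E : nat -> pt) (j : nat) (t : R) (i : nat) : pt :=
  if Nat.eq_dec i j then vadd (E j) (vscale t (E (S j)))
  else if Nat.eq_dec i (S j) then vscale (1 - t) (E (S j)) else E i.

Lemma sign_transfer a b c : 0 < a * b -> 0 <= a * c -> 0 <= b * c.
Proof. intros; nra. Qed.

Section Slide.

Variables (th l : R) (n k : nat) (E : nat -> pt) (t : R).
Hypothesis Hth : 0 <= th <= PI / 2.
Hypothesis HE : dcc_edges th l n E.
Hypothesis Hn : (S (S (S k)) < n)%nat.
Hypothesis Hinfl : edge_inflection E (S k).
Hypothesis Hlong : ~ vnorm (E (S k)) < l.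
Hypothesis Hshort : vnorm (E (S (S k))) < l.
Hypothesis Ht : 0 < t < 1.
Hypothesis Hsign :
  0 < cross (E k) (E (S k)) * cross (E k) (vadd (E (S k)) (vscale t (E (S (S k))))).

Local Notation w := (E k).
Local Notation e := (E (S k)).
Local Notation f := (E (S (S k))).
Local Notation e' := (vadd (E (S k)) (vscale t (E (S (S k))))).
Local Notation E' := (slide_vertex E (S k) t).

Let nondeg i : (S i < n)%nat -> E i <> (0, 0).
Proof. apply (dcc_nondeg _ _ _ _ HE). Qed.

Let turn_le i : (S (S i) < n)%nat -> angle (E i) (E (S i)) <= th.
Proof. apply (dcc_turn _ _ _ _ HE). Qed.

Let dot_ef : 0 <= dot e f.
Proof. apply (angle_dot_nonneg _ _ th); [apply nondeg; lia| apply nondeg; lia| lra| apply turn_le; lia]. Qed.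

Let e'_neq0 : e' <> (0, 0).
Proof. apply vadd_scale_neq0; [apply nondeg; lia| exact dot_ef| lra]. Qed.

Let e'_long : ~ vnorm e' < l.
Proof. pose proof (vnorm_le_vadd_scale e f t dot_ef); lra. Qed.

Let cross_ef_ew : 0 < cross e f * cross e w.
Proof. unfold edge_inflection in Hinfl; simpl pred in Hinfl; nra. Qed.

Lemma slide_nondeg i : (S i < n)%nat -> E' i <> (0, 0).
Proof.
  intro Hi; unfold slide_vertex; destruct_eq_dec; try subst i; try (apply nondeg; lia); [exact e'_neq0|].
  apply vscale_neq0; [lra| apply nondeg; lia].
Qed.

Lemma slide_turn i : (S (S i) < n)%nat -> angle (E' i) (E' (S i)) <= th.
Proof.
  intro Hi; unfold slide_vertex; destruct_eq_dec; try subst i; try (apply turn_le; lia).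
  - rewrite angle_scale_r by lra.
    apply angle_le_vadd_r; [apply nondeg; lia| apply nondeg; lia| lra| lra| apply turn_le; lia].
  - rewrite angle_scale_l by lra; apply turn_le; lia.
  - rewrite angle_sym.
    apply angle_le_vadd_same_side; try (apply nondeg; lia); try (apply turn_le; lia); try lra.
    rewrite angle_sym; apply turn_le; lia.
Qed.

Lemma slide_no_two_short i : (S (S i) < n)%nat -> ~ (vnorm (E' i) < l /\ vnorm (E' (S i)) < l).
Proof.
  intro Hi; unfold slide_vertex; destruct_eq_dec; try subst i;
    try (intros [? ?]; apply e'_long; assumption).
  - rewrite vnorm_scale by lra; intros [_ Hg].
    apply (dcc_no_two_short _ _ _ _ HE (S (S k))); auto.
  - apply (dcc_no_two_short _ _ _ _ HE); auto.
Qed.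

Lemma slide_short_turn_next : (S (S (S (S k))) < n)%nat -> ~ edge_inflection E' (S (S k)) ->
  angle e' (E (S (S (S k)))) <= th.
Proof.
  intros Hn' Hi.
  assert (Hnot : ~ edge_inflection E (S (S k))).
  { intro Hinf; apply Hi; unfold edge_inflection, slide_vertex in *; simpl pred in *.
    destruct_eq_dec.
    rewrite !cross_scale_l, cross_vadd_scale_r, cross_self, Rmult_0_r, Rplus_0_r.
    replace ((1 - t) * cross f e * ((1 - t) * cross f (E (S (S (S k))))))
      with ((1 - t) * (1 - t) * (cross f e * cross f (E (S (S (S k)))))) by ring.
    apply Rmult_lt_0_compat; nra. }
  assert (Heg : angle e (E (S (S (S k)))) <= th)
    by (apply (dcc_short_turn _ _ _ _ HE (S (S k))); auto; lia).
  apply angle_le_vadd_same_side; try (apply nondeg; lia); try (apply turn_le; lia); try lra.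
  apply cross_turn_consistent; [apply nondeg; lia| exact dot_ef| |].
  - apply (angle_dot_nonneg _ _ th); [apply nondeg; lia| apply nondeg; lia| lra| apply turn_le; lia].
  - unfold edge_inflection in Hnot; simpl pred in Hnot; rewrite (cross_anti f e) in Hnot; nra.
Qed.

Lemma slide_short_turn_prev : (1 <= k)%nat -> vnorm w < l -> ~ edge_inflection E' k ->
  angle (E (pred k)) e' <= th.
Proof.
  intros Hk Hw Hi.
  assert (Hnot : ~ edge_inflection E k).
  { intro Hinf; apply Hi; unfold edge_inflection, slide_vertex in *; destruct_eq_dec.
    assert (0 < cross w e * cross w e) by nra; nra. }
  assert (Hxe : angle (E (pred k)) e <= th)
    by (apply (dcc_short_turn _ _ _ _ HE k); auto; lia).
  assert (Hxw : angle (E (pred k)) w <= th)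
    by (replace k with (S (pred k)) at 2 by lia; apply turn_le; lia).
  assert (Hew : 0 <= cross e w * cross e (E (pred k))).
  { apply cross_turn_consistent; [apply nondeg; lia| | |].
    - apply (angle_dot_nonneg _ _ th); [apply nondeg; lia| apply nondeg; lia| lra|].
      rewrite angle_sym; apply turn_le; lia.
    - rewrite dot_sym; apply (angle_dot_nonneg _ _ th); [apply nondeg; lia| apply nondeg; lia| lra| auto].
    - unfold edge_inflection in Hnot; rewrite (cross_anti e w); nra. }
  rewrite angle_sym; apply angle_le_vadd_same_side; try (apply nondeg; lia); try (apply turn_le; lia); try lra.
  - rewrite angle_sym; exact Hxe.
  - apply (sign_transfer (cross e w)); [|exact Hew]; rewrite Rmult_comm; exact cross_ef_ew.
Qed.

Lemma slide_short_turn m : (1 <= m)%nat -> (S (S m) < n)%nat -> vnorm (E' m) < l ->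
  ~ edge_inflection E' m -> angle (E' (pred m)) (E' (S m)) <= th.
Proof.
  intros Hm1 Hm2 Hs Hi.
  assert (Hcase : m = k \/ m = S k \/ m = S (S k) \/ m = S (S (S k)) \/
                  (m <> k /\ m <> S k /\ m <> S (S k) /\ m <> S (S (S k)))) by lia.
  destruct Hcase as [->|[->|[->|[->|Hm]]]]; unfold slide_vertex in Hs |- *; destruct_eq_dec.
  - apply slide_short_turn_prev; auto.
  - exfalso; exact (e'_long Hs).
  - apply slide_short_turn_next; auto.
  - exfalso; apply (dcc_no_two_short _ _ _ _ HE (S (S k))); auto; lia.
  - apply (dcc_short_turn _ _ _ _ HE); auto.
    unfold edge_inflection, slide_vertex in *; destruct_eq_dec; assumption.
Qed.

End Slide.

(* The sign condition says the slide keeps edge [S k] on the same side of edge [k]. *)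
Definition slide_admissible (l : R) (E : nat -> pt) (k : nat) (t : R) : Prop :=
  edge_inflection E (S k) /\ ~ vnorm (E (S k)) < l /\ vnorm (E (S (S k))) < l /\ 0 < t < 1 /\
  0 < cross (E k) (E (S k)) * cross (E k) (vadd (E (S k)) (vscale t (E (S (S k))))).

Lemma dcc_edges_slide th l n k E t : 0 <= th <= PI / 2 -> dcc_edges th l n E ->
  (S (S (S k)) < n)%nat -> slide_admissible l E k t ->
  dcc_edges th l n (slide_vertex E (S k) t).
Proof.
  intros Hth HE Hn (Hinfl & Hlong & Hshort & Ht & Hsign); constructor.
  - exact (dcc_nonempty _ _ _ _ HE).
  - eapply slide_nondeg; eassumption.
  - eapply slide_turn; eassumption.
  - eapply slide_no_two_short; eassumption.
  - eapply slide_short_turn; eassumption.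
Qed.

Lemma vnorm_vsub_sym x y : vnorm (vsub x y) = vnorm (vsub y x).
Proof. unfold vnorm, dot, vsub; simpl; f_equal; ring. Qed.

Lemma path_length_cons2 x y L : path_length (x :: y :: L) = vnorm (vsub y x) + path_length (y :: L).
Proof.
  unfold path_length; simpl length; simpl pred.
  change (seq 0 (S (length L))) with (0%nat :: seq 1 (length L)); cbn [map fold_right].
  rewrite <- seq_shift, map_map; reflexivity.
Qed.

Lemma path_length_single x : path_length [x] = 0.
Proof. reflexivity. Qed.

Lemma path_length_snoc L y : L <> [] ->
  path_length (L ++ [y]) = path_length L + vnorm (vsub y (last L (0, 0))).
Proof.
  induction L as [|x [|x' L] IH]; intro HL; [congruence| |].
  - simpl; rewrite path_length_cons2, !path_length_single; ring.
  - change ((x :: x' :: L) ++ [y]) with (x :: x' :: (L ++ [y])).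
    rewrite !path_length_cons2.
    change (x' :: L ++ [y]) with ((x' :: L) ++ [y]); rewrite IH by discriminate.
    simpl last; ring.
Qed.

Lemma rev_neq_nil (L : list pt) : L <> [] -> rev L <> [].
Proof. intros HL Hr; apply HL; rewrite <- (rev_involutive L), Hr; reflexivity. Qed.

Lemma path_length_rev L : path_length (rev L) = path_length L.
Proof.
  induction L as [|x [|y L] IH]; [reflexivity| reflexivity|].
  change (rev (x :: y :: L)) with (rev (y :: L) ++ [x]).
  rewrite path_length_snoc, IH, path_length_cons2, vnorm_vsub_sym.
  - simpl rev; rewrite last_last; ring.
  - apply rev_neq_nil; discriminate.
Qed.

Lemma vtx_rev L i : (i < length L)%nat -> vtx (rev L) i = vtx L (length L - S i).
Proof. intro Hi; apply rev_nth, Hi. Qed.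

Lemma evec_rev L i : (S i < length L)%nat -> evec (rev L) i = rev_edges (length L) (evec L) i.
Proof.
  intro Hi; unfold evec, rev_edges; rewrite !vtx_rev by lia.
  replace (length L - S i)%nat with (S (length L - 2 - i)) by lia.
  replace (length L - S (S i))%nat with (length L - 2 - i)%nat by lia.
  apply pt_eq; unfold vsub, vscale; simpl; ring.
Qed.

Lemma dcc_path_rev th l L : dcc_path th l L -> dcc_path th l (rev L).
Proof.
  rewrite !dcc_path_iff, length_rev; intro HL.
  apply (dcc_edges_ext _ _ _ (rev_edges (length L) (evec L))).
  - apply evec_rev.
  - apply dcc_edges_rev, HL.
Qed.

Lemma vtx_rev_0 L : vtx (rev L) 0 = last L (0, 0).
Proof.
  destruct L as [|x L] using rev_ind; [reflexivity|].
  rewrite rev_app_distr, last_last; reflexivity.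
Qed.

Lemma last_rev L : last (rev L) (0, 0) = vtx L 0.
Proof. destruct L as [|x L]; [reflexivity|]; simpl; rewrite last_last; reflexivity. Qed.

Lemma vscale_opp_opp U : vscale (-1) (vscale (-1) U) = U.
Proof. apply pt_eq; unfold vscale; simpl; ring. Qed.

Lemma starts_at_rev th l q u U : starts_at th l q u U -> ends_at th l (rev q) u (vscale (-1) U).
Proof.
  intros (Hq & H0 & Hd); split; [apply rev_neq_nil, Hq|]; split; [rewrite last_rev; exact H0|].
  replace (vadd u (vscale (-1) U)) with (vsub u U) by (apply pt_eq; unfold vadd, vsub, vscale; simpl; ring).
  apply (dcc_path_rev _ _ (vsub u U :: q)), Hd.
Qed.

Lemma ends_at_rev th l q v V : ends_at th l q v V -> starts_at th l (rev q) v (vscale (-1) V).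
Proof.
  intros (Hq & Hl & Hd); split; [apply rev_neq_nil, Hq|]; split; [rewrite vtx_rev_0; exact Hl|].
  replace (vsub v (vscale (-1) V)) with (vadd v V) by (apply pt_eq; unfold vadd, vsub, vscale; simpl; ring).
  replace (vadd v V :: rev q) with (rev (q ++ [vadd v V])) by (rewrite rev_app_distr; reflexivity).
  apply dcc_path_rev, Hd.
Qed.

Lemma dubins_path_rev th l p u U v V : dubins_path th l p u U v V ->
  dubins_path th l (rev p) v (vscale (-1) V) u (vscale (-1) U).
Proof.
  intros (Hp & Hs & He & Hmin); split; [apply dcc_path_rev, Hp|].
  split; [apply ends_at_rev, He|]; split; [apply starts_at_rev, Hs|].
  intros q Hq Hqs Hqe; rewrite path_length_rev, <- (path_length_rev q).
  apply Hmin; [apply dcc_path_rev, Hq| |].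
  - pose proof (ends_at_rev _ _ _ _ _ Hqe) as Hr; rewrite vscale_opp_opp in Hr; exact Hr.
  - pose proof (starts_at_rev _ _ _ _ _ Hqs) as Hr; rewrite vscale_opp_opp in Hr; exact Hr.
Qed.

Fixpoint set_vertex (L : list pt) (k : nat) (z : pt) : list pt :=
  match L, k with
  | [], _ => []
  | _ :: L', O => z :: L'
  | x :: L', S k' => x :: set_vertex L' k' z
  end.

Lemma length_set_vertex L k z : length (set_vertex L k z) = length L.
Proof. revert k; induction L as [|x L IH]; intros [|k]; simpl; auto. Qed.

Lemma vtx_set_vertex_same L k z : (k < length L)%nat -> vtx (set_vertex L k z) k = z.
Proof.
  revert k; induction L as [|x L IH]; intros [|k] Hk; simpl in Hk; try lia; [reflexivity|].
  apply IH; lia.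
Qed.

Lemma vtx_set_vertex_other L k z i : i <> k -> vtx (set_vertex L k z) i = vtx L i.
Proof.
  revert k i; induction L as [|x L IH]; intros [|k] [|i] Hi; try reflexivity; [lia|].
  apply IH; lia.
Qed.

Lemma set_vertex_app L y k z : (k < length L)%nat -> set_vertex (L ++ [y]) k z = set_vertex L k z ++ [y].
Proof.
  revert k; induction L as [|x L IH]; intros [|k] Hk; simpl in Hk; try lia; [reflexivity|].
  simpl; rewrite IH by lia; reflexivity.
Qed.

Lemma path_length_set_vertex L j z : (S (S j) < length L)%nat ->
  path_length (set_vertex L (S j) z) - path_length L
  = vnorm (vsub z (vtx L j)) + vnorm (vsub (vtx L (S (S j))) z) - (elen L j + elen L (S j)).
Proof.
  revert j; induction L as [|x [|y L] IH]; intros [|j] Hj; simpl in Hj; try lia.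
  - destruct L as [|w L]; simpl in Hj; [lia|].
    change (set_vertex (x :: y :: w :: L) 1 z) with (x :: z :: w :: L).
    rewrite !path_length_cons2; unfold elen, evec, vtx; simpl; ring.
  - change (set_vertex (x :: y :: L) (S (S j)) z) with (x :: y :: set_vertex L j z).
    rewrite !path_length_cons2.
    change (y :: set_vertex L j z) with (set_vertex (y :: L) (S j) z).
    pose proof (IH j ltac:(simpl; lia)) as IHj.
    match goal with |- ?lhs = _ =>
      replace lhs with (path_length (set_vertex (y :: L) (S j) z) - path_length (y :: L)) by ring end.
    exact IHj.
Qed.

Lemma evec_set_vertex_slide L k t z : (S (S k) < length L)%nat ->
  z = vadd (vtx L (S (S k))) (vscale t (evec L (S (S k)))) ->
  forall i, evec (set_vertex L (S (S k)) z) i = slide_vertex (evec L) (S k) t i.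
Proof.
  intros Hk Hz i; unfold evec, slide_vertex; destruct_eq_dec; try subst i;
    rewrite ?vtx_set_vertex_same, ?vtx_set_vertex_other by lia; try reflexivity;
    subst z; apply pt_eq; unfold evec, vadd, vsub, vscale; simpl; ring.
Qed.

Lemma dcc_path_slide th l L k t z : 0 <= th <= PI / 2 -> dcc_path th l L ->
  (S (S (S k)) < length L)%nat -> slide_admissible l (evec L) k t ->
  z = vadd (vtx L (S (S k))) (vscale t (evec L (S (S k)))) ->
  dcc_path th l (set_vertex L (S (S k)) z).
Proof.
  intros Hth HL Hk Hadm Hz; rewrite dcc_path_iff in HL |- *; rewrite length_set_vertex.
  apply (dcc_edges_ext _ _ _ (slide_vertex (evec L) (S k) t)).
  - intros i _; apply evec_set_vertex_slide; [lia| exact Hz].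
  - apply dcc_edges_slide; assumption.
Qed.

Lemma slide_admissible_ext l E E' k t : (forall i, (i <= S (S k))%nat -> E' i = E i) ->
  slide_admissible l E k t -> slide_admissible l E' k t.
Proof. intro HE; unfold slide_admissible, edge_inflection; simpl pred; rewrite !HE by lia; tauto. Qed.

Lemma vtx_app_lt L y i : (i < length L)%nat -> vtx (L ++ [y]) i = vtx L i.
Proof. apply app_nth1. Qed.

Lemma evec_app_lt L y i : (S i < length L)%nat -> evec (L ++ [y]) i = evec L i.
Proof. intro Hi; unfold evec; rewrite !vtx_app_lt by lia; reflexivity. Qed.

Lemma last_vtx L : last L (0, 0) = vtx L (pred (length L)).
Proof.
  induction L as [|x [|y L] IH]; try reflexivity.
  change (last (x :: y :: L) (0, 0)) with (last (y :: L) (0, 0)); rewrite IH; reflexivity.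
Qed.

Lemma set_vertex_neq_nil L k z : L <> [] -> set_vertex L k z <> [].
Proof. destruct L, k; simpl; congruence. Qed.

Lemma starts_at_slide th l L u U k t z : 0 <= th <= PI / 2 -> starts_at th l L u U ->
  (S (S (S k)) < length L)%nat -> slide_admissible l (evec L) k t ->
  z = vadd (vtx L (S (S k))) (vscale t (evec L (S (S k)))) ->
  starts_at th l (set_vertex L (S (S k)) z) u U.
Proof.
  intros Hth (HL & H0 & Hd) Hk Hadm Hz; split; [apply set_vertex_neq_nil, HL|].
  split; [rewrite vtx_set_vertex_other by lia; exact H0|].
  exact (dcc_path_slide th l (vsub u U :: L) (S k) t z Hth Hd ltac:(simpl; lia) Hadm Hz).
Qed.

Lemma ends_at_slide th l L v V k t z : 0 <= th <= PI / 2 -> ends_at th l L v V ->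
  (S (S (S k)) < length L)%nat -> slide_admissible l (evec L) k t ->
  z = vadd (vtx L (S (S k))) (vscale t (evec L (S (S k)))) ->
  ends_at th l (set_vertex L (S (S k)) z) v V.
Proof.
  intros Hth (HL & Hl & Hd) Hk Hadm Hz; split; [apply set_vertex_neq_nil, HL|].
  split; [rewrite last_vtx, length_set_vertex, vtx_set_vertex_other, <- last_vtx by lia; exact Hl|].
  rewrite <- set_vertex_app by lia.
  apply (dcc_path_slide _ _ _ _ t); [assumption| assumption| rewrite length_app; simpl; lia| |].
  - apply (slide_admissible_ext _ (evec L)); [intros; apply evec_app_lt; lia| exact Hadm].
  - rewrite vtx_app_lt, evec_app_lt by lia; exact Hz.
Qed.

Lemma exists_step_keeping_sign A B : A <> 0 -> exists t, 0 < t < 1 /\ 0 < A * (A + t * B).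
Proof.
  intro HA; pose proof (Rabs_pos_lt A HA); pose proof (Rabs_pos B).
  exists (Rabs A / (2 * (Rabs A + Rabs B))).
  set (t := Rabs A / (2 * (Rabs A + Rabs B))).
  assert (Ht : t * (2 * (Rabs A + Rabs B)) = Rabs A) by (unfold t; field; lra).
  assert (0 < t) by (unfold t; apply Rdiv_lt_0_compat; lra).
  assert (Hsq : A * A = Rabs A * Rabs A) by (rewrite <- Rabs_mult, Rabs_right; nra).
  assert (Hab : - (Rabs A * Rabs B) <= A * B)
    by (rewrite <- Rabs_mult, <- Rabs_Ropp; pose proof (Rle_abs (- (A * B))); lra).
  split; [split|]; nra.
Qed.

Lemma inflection_cross_neq0 E j : edge_inflection E j ->
  cross (E (pred j)) (E j) <> 0 /\ cross (E j) (E (S j)) <> 0.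
Proof.
  unfold edge_inflection; intro H; split; intro Z.
  - rewrite (cross_anti (E j)), Z, Ropp_0, Rmult_0_l in H; lra.
  - rewrite Z, Rmult_0_r in H; lra.
Qed.

Lemma dubins_next_not_short th l p u U v V k : 0 <= th <= PI / 2 -> dubins_path th l p u U v V ->
  (S (S (S k)) < length p)%nat -> inflection p (S k) -> ~ short l p (S k) ->
  ~ short l p (S (S k)).
Proof.
  unfold short, elen; intros Hth (Hp & Hs & He & Hmin) Hk Hinfl Hlong Hshort.
  rewrite inflection_iff in Hinfl by lia.
  destruct (inflection_cross_neq0 _ _ Hinfl) as [Hwe Hef]; simpl pred in Hwe.
  destruct (exists_step_keeping_sign _ (cross (evec p k) (evec p (S (S k)))) Hwe) as (t & Ht & Hsign).
  rewrite <- cross_vadd_scale_r in Hsign.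
  assert (Hadm : slide_admissible l (evec p) k t) by (repeat split; lra || assumption).
  set (z := vadd (vtx p (S (S k))) (vscale t (evec p (S (S k))))).
  pose proof (Hmin _ (dcc_path_slide _ _ _ _ _ z Hth Hp Hk Hadm eq_refl)
                     (starts_at_slide _ _ _ _ _ _ _ z Hth Hs Hk Hadm eq_refl)
                     (ends_at_slide _ _ _ _ _ _ _ z Hth He Hk Hadm eq_refl)) as Hle.
  pose proof (path_length_set_vertex p (S k) z ltac:(lia)) as Hdiff.
  (* the slid vertex cuts the corner at the non-degenerate turn between edges S k and S (S k) *)
  replace (vsub z (vtx p (S k))) with (vadd (evec p (S k)) (vscale t (evec p (S (S k))))) in Hdiff
    by (apply pt_eq; unfold z, evec, vadd, vsub, vscale; simpl; ring).
  replace (vsub (vtx p (S (S (S k)))) z) with (vscale (1 - t) (evec p (S (S k)))) in Hdiff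
    by (apply pt_eq; unfold z, evec, vadd, vsub, vscale; simpl; ring).
  pose proof (vnorm_triangle_strict (evec p (S k)) (vscale t (evec p (S (S k))))) as Htri.
  rewrite cross_scale_r, !vnorm_scale in * by lra.
  assert (t * cross (evec p (S k)) (evec p (S (S k))) <> 0) by (apply Rmult_integral_contrapositive; split; lra).
  specialize (Htri ltac:(assumption)); unfold elen in Hdiff; lra.
Qed.

Lemma elen_rev L i : (S i < length L)%nat -> elen (rev L) i = elen L (length L - 2 - i).
Proof. intro Hi; unfold elen; rewrite evec_rev by exact Hi; apply vnorm_opp. Qed.

Lemma inflection_rev L j : (1 <= j)%nat -> (S (S j) < length L)%nat ->
  inflection (rev L) j <-> inflection L (length L - 2 - j).
Proof.
  intros Hj1 Hj2; rewrite !inflection_iff by lia.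
  rewrite (edge_inflection_ext (length L) (rev_edges (length L) (evec L)) (evec (rev L)))
    by (rewrite ?length_rev; auto; intros; rewrite evec_rev by lia; reflexivity).
  apply edge_inflection_rev; assumption.
Qed.

Lemma dubins_prev_not_short th l p u U v V j : 0 <= th <= PI / 2 -> dubins_path th l p u U v V ->
  (1 <= j)%nat -> (S (S j) < length p)%nat -> inflection p j -> ~ short l p j ->
  ~ short l p (pred j).
Proof.
  intros Hth Hdub Hj1 Hj2 Hinfl Hlong.
  set (k := (length p - 3 - j)%nat).
  assert (Hk : (S (S (S k)) < length (rev p))%nat) by (rewrite length_rev; lia).
  pose proof (dubins_next_not_short _ _ _ _ _ _ _ k Hth (dubins_path_rev _ _ _ _ _ _ _ Hdub) Hk) as Hnext.
  unfold short in *; rewrite !elen_rev, inflection_rev in Hnext by (rewrite ?length_rev in *; lia).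
  replace (length p - 2 - S k)%nat with j in Hnext by lia.
  replace (length p - 2 - S (S k))%nat with (pred j) in Hnext by lia.
  exact (Hnext Hinfl Hlong).
Qed.

Lemma vtx_map_seq f n i : (i < n)%nat -> vtx (map f (seq 0 n)) i = f i.
Proof.
  intro Hi; unfold vtx; rewrite nth_indep with (d' := f 0%nat) by (rewrite length_map, length_seq; lia).
  rewrite map_nth, seq_nth by lia; reflexivity.
Qed.

Lemma length_shift_path p j eps : length (shift_path p j eps) = length p.
Proof. unfold shift_path; rewrite length_map, length_seq; reflexivity. Qed.

Lemma evec_shift_path p j eps i : (S i < length p)%nat ->
  evec (shift_path p j eps) i = scale_edge (evec p) j (1 - eps) i.
Proof.
  intro Hi; unfold evec, shift_path, scale_edge; rewrite !vtx_map_seq by lia.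
  destruct (Nat.leb_spec (S i) j), (Nat.leb_spec i j); destruct_eq_dec; try subst i; try lia;
    apply pt_eq; unfold evec, vsub, vadd, vscale; simpl; ring.
Qed.

Lemma dcc_path_shift th l p j eps : dcc_path th l p -> (1 <= j)%nat -> inflection p j -> 0 < eps < 1 ->
  ((1 - eps) * elen p j < l -> ~ short l p (pred j) /\ ~ short l p (S j)) ->
  dcc_path th l (shift_path p j eps).
Proof.
  intros Hp Hj Hinfl Heps Hnb; rewrite dcc_path_iff in Hp |- *; rewrite length_shift_path.
  apply (dcc_edges_ext _ _ _ (scale_edge (evec p) j (1 - eps))); [apply evec_shift_path|].
  apply dcc_edges_scale_edge; try assumption; try lra.
  - rewrite <- inflection_iff; assumption.
  - rewrite vnorm_scale by lra; exact Hnb.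
Qed.

Lemma dubins_inflection_neighbours_not_short th l p u U v V j : 0 <= th <= PI / 2 ->
  dubins_path th l p u U v V -> (1 <= j)%nat -> (S (S j) < length p)%nat -> inflection p j ->
  elen p j <= l -> ~ short l p (pred j) /\ ~ short l p (S j).
Proof.
  intros Hth Hdub Hj1 Hj2 Hinfl Hle.
  destruct (Rlt_dec (elen p j) l) as [Hshort|Hlong].
  - destruct Hdub as ((_ & _ & _ & Hii & _) & _); destruct j as [|k]; [lia|]; split.
    + intro Hs; apply (Hii k); [lia| split; assumption].
    + intro Hs; apply (Hii (S k)); [lia| split; assumption].
  - split.
    + apply (dubins_prev_not_short th l p u U v V); assumption.
    + destruct j as [|k]; [lia|]; apply (dubins_next_not_short th l p u U v V); assumption.
Qed.

Lemma exists_shrink_above l x : 0 < l < x -> exists eps, 0 < eps < 1 /\ l <= (1 - eps) * x.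
Proof.
  intro Hlx; exists ((x - l) / (2 * x)).
  assert (Heps : (x - l) / (2 * x) * (2 * x) = x - l) by (field; lra).
  assert (0 < (x - l) / (2 * x)) by (apply Rdiv_lt_0_compat; lra).
  split; [split|]; nra.
Qed.

Theorem lemma5 (theta l : R) (u U v V : pt) (p : list pt) (j : nat)
  (Htheta : 0 < theta <= PI / 2)
  (Hk : exists k : nat, 2 * PI / theta = INR k)
  (Hl : 0 < l)
  (HU : config l u U) (HV : config l v V)
  (Hdub : dubins_path theta l p u U v V)
  (Hnz : forall i, (S (S i) < length p)%nat -> turn p i <> 0)
  (Hj1 : (1 <= j)%nat) (Hj2 : (S (S j) < length p)%nat)
  (Hinfl : inflection p j) :
  exists eps, 0 < eps <= 1 /\ dcc_path theta l (shift_path p j eps).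
Proof.
  assert (Hth : 0 <= theta <= PI / 2) by lra.
  assert (Hp : dcc_path theta l p) by apply Hdub.
  destruct (Rle_lt_dec (elen p j) l) as [Hle|Hgt].
  - exists (1 / 2); split; [lra|].
    apply dcc_path_shift; try assumption; [lra|].
    intros _; apply (dubins_inflection_neighbours_not_short theta l p u U v V); assumption.
  - destruct (exists_shrink_above l (elen p j)) as (eps & Heps & Hlong); [lra|].
    exists eps; split; [lra|].
    apply dcc_path_shift; try assumption; lra.
Qed.
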